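(* Fix an sBS $k$ and suppose that in slots $0,1,\dots,t-1$ each file is recommended independently with probability $q=r/F$ and cached independently with probability $p=c/F$, and that $\hat{\mathbf P}_k^{(t)}$ is the point estimate. Let $(\mathbf u^*_{o,t},\mathbf v^*_{o,t})\in\arg\max_{(\mathbf u,\mathbf v)\in\mathcal C_{c,r}}\mathbf u^T\hat{\mathbf P}_k^{(t)}\mathbf v$. Then for any $\epsilon>0$ and $\delta>0$, with probability at least $1-\delta$, $$(\mathbf u^*_{o,t})^T\mathbf P_k\mathbf v^*_{o,t}\ge\sup_{(\mathbf u,\mathbf v)\in\mathcal C_{c,r}}\mathbf u^T\mathbf P_k\mathbf v-\epsilon,$$ provided $$t\ge\frac{1}{q\left(1-\exp\{-\frac{N\epsilon^2}{8\kappa^2F^2c^2r^2}\}\right)}\log\frac{2|\mathcal N_\epsilon|F^2}{\delta}.$$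
   Context: Setting: a catalog of $F$ files $\{1,\dots,F\}$; time is slotted; in every slot each of $N$ users of a small base station (sBS) requests a file. For sBS $k$, the probability transition matrix (PTM) $\mathbf P_k\in[0,1]^{F\times F}$ has entries $(\mathbf P_k)_{ij}=p_{ij,k}$, the probability that a user at sBS $k$ requests file $i$ given that file $j$ is recommended; $\mathbf P_k$ does not change over time. For a cache size $c>0$ and a recommendation budget $r>0$, the strategy set is $\mathcal C_{c,r}=\{(\mathbf u,\mathbf v)\in[0,1]^F\times[0,1]^F:\mathbf u^T\mathbf 1\le c,\ \mathbf v^T\mathbf 1\le r\}$; the average cache hit of $(\mathbf u,\mathbf v)$ at sBS $k$ is $\mathbf u^T\mathbf P_k\mathbf v$. $d_{ik}^{(s)}$ is the number of requests for file $i$ at sBS $k$ in slot $s$, and $v_{jk}^{s}\in\{0,1\}$ indicates whether file $j$ was recommended at sBS $k$ in slot $s$. Statistical assumption: conditionally on the recommendation indicators, for each slot $s$ with $v_{jk}^{s-1}=1$, $d_{ik}^{(s)}$ is a sum of $N$ i.i.d. Bernoulli$(p_{ij,k})$ variables, independent across such slots. Point estimator: $\hat p_{ij,k}^{(t)}=\frac{\sum_{s=0}^{t-1}d_{ik}^{(s)}v_{jk}^{s-1}}{N\sum_{s=0}^{t-1}v_{jk}^{s-1}}$, and $\hat{\mathbf P}_k^{(t)}$ is the matrix of these entries. An $\epsilon$-cover of $\mathcal C_{c,r}$ is a finite set $\mathcal N_\epsilon$ of pairs $(\mathbf x,\mathbf y)$ such that for every $(\mathbf u,\mathbf v)\in\mathcal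 C_{c,r}$ some $(\mathbf x,\mathbf y)\in\mathcal N_\epsilon$ satisfies $\|\mathbf u-\mathbf x\|_2\le\epsilon/8$ and $\|\mathbf v-\mathbf y\|_2\le\epsilon/8$; $|\mathcal N_\epsilon|$ is its cardinality. $\kappa>0$ is a fixed constant such that $|\mathbf x^T A\mathbf y|\le\kappa\|\mathbf x\|_1\|\mathbf y\|_1\|A\|_F$ for all vectors $\mathbf x,\mathbf y$ and matrices $A$. *)

From mathcomp Require Import all_boot all_order all_algebra.
From mathcomp Require Import boolp classical_sets reals sequences exp.

Set Implicit Arguments.
Unset Strict Implicit.
Unset Printing Implicit Defensive.

Import Order.TTheory GRing.Theory Num.Theory.
Local Open Scope ring_scope.

Section Defs.
Variable R : realType.

Definition is_pmf (Omega : finType) (mu : Omega -> R) : Prop :=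
  (forall w, 0 <= mu w) /\ \sum_(w : Omega) mu w = 1.

Definition Pr (Omega : finType) (mu : Omega -> R) (A : Omega -> Prop) : R :=
  \sum_(w : Omega) (if `[< A w >] then mu w else 0).

Definition mutually_independent (Omega : finType) (mu : Omega -> R)
    (I : finType) (X : I -> Omega -> bool) : Prop :=
  forall (S : {set I}) (b : I -> bool),
    Pr mu (fun w => forall i, i \in S -> X i w = b i)
    = \prod_(i in S) Pr mu (fun w => X i w = b i).

Definition binom_pmf (N : nat) (p : R) (k : nat) : R :=
  ('C(N, k))%:R * p ^+ k * (1 - p) ^+ (N - k).

Definition bilin (m n : nat) (x : 'cV[R]_m) (A : 'M[R]_(m, n)) (y : 'cV[R]_n) : R :=
  (x^T *m A *m y) 0 0.

Definition norm1 (n : nat) (x : 'cV[R]_n) : R := \sum_i `|x i 0|.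
Definition norm2 (n : nat) (x : 'cV[R]_n) : R := Num.sqrt (\sum_i (x i 0) ^+ 2).
Definition frob (m n : nat) (A : 'M[R]_(m, n)) : R :=
  Num.sqrt (\sum_i \sum_j (A i j) ^+ 2).

Definition inC (F : nat) (c r : R) (u v : 'cV[R]_F) : Prop :=
  (forall i, 0 <= u i 0 <= 1) /\ (forall j, 0 <= v j 0 <= 1) /\
  \sum_i u i 0 <= c /\ \sum_j v j 0 <= r.

Definition supC (F : nat) (c r : R) (P : 'M[R]_F) : R :=
  sup [set x : R | exists u v, inC c r u v /\ x = bilin u P v]%classic.

Definition is_argmaxC (F : nat) (c r : R) (M : 'M[R]_F) (u v : 'cV[R]_F) : Prop :=
  inC c r u v /\ forall u' v', inC c r u' v' -> bilin u' M v' <= bilin u M v.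

(* the finite list cov is an epsilon-cover of C_{c,r} (duplicate-free, so
   its size is the cardinality |N_eps|) *)
Definition is_eps_cover (F : nat) (c r eps : R) (cov : seq ('cV[R]_F * 'cV[R]_F)) : Prop :=
  uniq cov /\
  forall u v, inC c r u v ->
    exists2 xy, xy \in cov & norm2 (u - xy.1) <= eps / 8 /\ norm2 (v - xy.2) <= eps / 8.

Definition kappa_ok (kappa : R) : Prop :=
  forall (m n : nat) (x : 'cV[R]_m) (A : 'M[R]_(m, n)) (y : 'cV[R]_n),
    `|bilin x A y| <= kappa * norm1 x * norm1 y * frob A.

(* d i s  : number of requests for file i in slot s  (s = 0..t-1)
   rec j s : indicator v_j^{s-1} (file j recommended in the slot preceding s) *)
Definition Phat (F t N : nat) (d : 'I_F -> 'I_t -> nat) (rec : 'I_F -> 'I_t -> bool)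
  : 'M[R]_F :=
  \matrix_(i, j) ((\sum_(s < t) ((d i s)%:R * (rec j s)%:R))
                  / (N%:R * \sum_(s < t) (rec j s)%:R)).

End Defs.

From mathcomp Require Import all_boot all_order all_algebra.
From mathcomp Require Import boolp classical_sets reals sequences exp.
From mathcomp Require Import ring lra.
Import Order.TTheory GRing.Theory Num.Theory.
Local Open Scope ring_scope.

(* If every entry of the estimate is within eta := eps / (2 c r) of P, then, u and v being
   nonnegative with ||u||_1 <= c and ||v||_1 <= r, the objectives u^T Phat v and u^T P v differ
   by at most eps / 2 uniformly on C_{c,r}, so the plug-in maximiser is eps-optimal for P.
   For one entry (i, j), condition on the recommendation pattern of file j: the counts in the
   m recommended slots are independent Binomial(N, p_ij), and Chernoff's bound with the
   sub-Gaussian estimate of the Binomial moment generating function bounds the deviation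
   probability by 2 exp(-m N eta^2 / 2). Averaging over the Bernoulli(q) pattern gives
   2 (q exp(-N eta^2 / 2) + 1 - q)^t <= 2 exp(-t q (1 - exp(-N eta^2 / 2))), and a union bound
   over the F^2 entries concludes. The cover and kappa only enter through |N_eps| >= 1 and
   kappa >= 1, which make the stated sample-size condition stronger than needed. *)

Set Implicit Arguments.
Unset Strict Implicit.
Unset Printing Implicit Defensive.

Section BinomialBounds.
Variable R : realType.

Lemma expR_le_quadratic (y : R) : -1 <= y <= 1 -> expR y <= 1 + y + 2 * y ^+ 2.
Proof.
move=> /andP[y_ge y_le]; set z := y / 2.
have z_le : z <= 1 / 2 by rewrite /z; lra.
have z_ge : - (1 / 2) <= z by rewrite /z; lra.
have ez_gt0 : 0 < expR z := expR_gt0 z.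
(* [expR z * (1 - z) <= expR z * expR (- z) = 1], i.e. [expR z <= 1 / (1 - z)] *)
have ez_1Bz : expR z * (1 - z) <= 1.
  rewrite -[leRHS](expR0 R) -(subrr z) expRD.
  by apply: ler_wpM2l; [exact: ltW | exact: expR_ge1Dx].
have ez_le : expR z <= 1 + z + 2 * z ^+ 2 by nra.
have -> : y = z + z by rewrite /z; field.
rewrite expRD.
apply: le_trans (ler_pM (ltW ez_gt0) (ltW ez_gt0) ez_le ez_le) _.
have : 0 <= z ^+ 2 * ((1 - 2 * z) * (3 + 2 * z)).
  by apply: mulr_ge0; [exact: sqr_ge0 | apply: mulr_ge0; lra].
suff -> : 1 + (z + z) + 2 * (z + z) ^+ 2 = (1 + z + 2 * z ^+ 2) * (1 + z + 2 * z ^+ 2)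
  + z ^+ 2 * ((1 - 2 * z) * (3 + 2 * z)) by lra.
by ring.
Qed.

Lemma bernoulli_mgf_le (p l : R) : 0 <= p <= 1 -> -1 <= l <= 1 ->
  (1 - p) * expR (- (l * p)) + p * expR (l * (1 - p)) <= expR (l ^+ 2 / 2).
Proof.
move=> /andP[p_ge0 p_le1] /andP[l_ge l_le].
have e1 : expR (- (l * p)) <= 1 - l * p + 2 * (l * p) ^+ 2.
  by rewrite -sqrrN; apply: expR_le_quadratic; apply/andP; split; nra.
have e2 : expR (l * (1 - p)) <= 1 + l * (1 - p) + 2 * (l * (1 - p)) ^+ 2.
  by apply: expR_le_quadratic; apply/andP; split; nra.
have {}e1 := ler_wpM2l (_ : 0 <= 1 - p) e1; have {}e2 := ler_wpM2l p_ge0 e2.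
have pq_le : l ^+ 2 * (p * (1 - p)) <= l ^+ 2 / 4.
  have pq : p * (1 - p) <= 1 / 4.
    by rewrite -subr_ge0 (_ : _ - _ = (p - 1 / 2) ^+ 2) ?sqr_ge0 //; field.
  by have := ler_wpM2l (sqr_ge0 l) pq; lra.
apply: le_trans (expR_ge1Dx _).
suff : (1 - p) * (1 - l * p + 2 * (l * p) ^+ 2) + p * (1 + l * (1 - p) + 2 * (l * (1 - p)) ^+ 2)
  = 1 + 2 * (l ^+ 2 * (p * (1 - p))) by lra.
by ring.
Qed.

Lemma binomial_mgf_le (N : nat) (p l : R) : 0 <= p <= 1 -> -1 <= l <= 1 ->
  \sum_(x < N.+1) binom_pmf N p x * expR (l * (x%:R - N%:R * p))
  <= expR (N%:R * (l ^+ 2 / 2)).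
Proof.
move=> p01 l11; have /andP[p_ge0 p_le1] := p01.
have -> : \sum_(x < N.+1) binom_pmf N p x * expR (l * (x%:R - N%:R * p))
    = ((1 - p) * expR (- (l * p)) + p * expR (l * (1 - p))) ^+ N.
  have -> : (1 - p) * expR (- (l * p)) + p * expR (l * (1 - p))
      = ((1 - p) + p * expR l) * expR (- (l * p)).
    by rewrite (_ : l * (1 - p) = l + - (l * p)) ?expRD; ring.
  rewrite exprMn exprDn mulr_suml; apply: eq_bigr => x _.
  have -> : l * (x%:R - N%:R * p) = x%:R * l + N%:R * (- (l * p)) by ring.
  by rewrite /binom_pmf expRD !expRM_natl exprMn -mulr_natr; ring.
rewrite expRM_natl; apply: lerXn2r; rewrite ?nnegrE ?expR_ge0 //.
- by apply: addr_ge0; apply: mulr_ge0; rewrite ?expR_ge0 //; lra.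
- exact: bernoulli_mgf_le.
Qed.

Lemma binom_pmf_ge0 (N : nat) (p : R) k : 0 <= p <= 1 -> 0 <= binom_pmf N p k.
Proof. by case/andP=> p_ge0 p_le1; rewrite !mulr_ge0 ?exprn_ge0 ?subr_ge0. Qed.

Lemma binomial_chernoff_term_le (N : nat) (p eta l : R) :
  0 <= p <= 1 -> -1 <= l <= 1 -> l ^+ 2 = eta ^+ 2 ->
  \sum_(x < N.+1) binom_pmf N p x * expR (l * (x%:R - N%:R * p) - eta * N%:R * eta)
  <= expR (- (N%:R * (eta ^+ 2 / 2))).
Proof.
move=> p01 l11 l_eta.
have -> : \sum_(x < N.+1) binom_pmf N p x * expR (l * (x%:R - N%:R * p) - eta * N%:R * eta)
    = (\sum_(x < N.+1) binom_pmf N p x * expR (l * (x%:R - N%:R * p)))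
      * expR (- (eta * N%:R * eta)).
  by rewrite mulr_suml; apply: eq_bigr => x _; rewrite expRD mulrA.
apply: le_trans (ler_wpM2r (expR_ge0 _) (binomial_mgf_le N p01 l11)) _.
rewrite -expRD l_eta.
by have -> : N%:R * (eta ^+ 2 / 2) + - (eta * N%:R * eta) = - (N%:R * (eta ^+ 2 / 2)) by field.
Qed.

End BinomialBounds.

Section FiniteProbability.
Variables (R : realType) (Omega : finType) (mu : Omega -> R).
Hypothesis mu_pmf : is_pmf mu.

Lemma mu_ge0 w : 0 <= mu w. Proof. by case: mu_pmf. Qed.

Lemma Pr_term_ge0 (A : Omega -> Prop) w : 0 <= (if `[< A w >] then mu w else 0).
Proof. by case: ifP => // _; exact: mu_ge0. Qed.

Lemma eq_Pr (A B : Omega -> Prop) : (forall w, A w <-> B w) -> Pr mu A = Pr mu B.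
Proof. by move=> AB; apply: eq_bigr => w _; rewrite (propext (AB w)). Qed.

Lemma Pr_predE (b : pred Omega) : Pr mu (fun w => b w) = \sum_(w | b w) mu w.
Proof. by rewrite big_mkcond; apply: eq_bigr => w _; rewrite asboolb. Qed.

Lemma Pr_ge0 (A : Omega -> Prop) : 0 <= Pr mu A.
Proof. by apply: sumr_ge0 => w _; exact: Pr_term_ge0. Qed.

Lemma le_Pr (A B : Omega -> Prop) : (forall w, A w -> B w) -> Pr mu A <= Pr mu B.
Proof.
move=> AB; apply: ler_sum => w _.
case: (asboolP (A w)) => [Aw | _]; last exact: Pr_term_ge0.
by rewrite asboolT //; exact: AB.
Qed.

Lemma mu_le_Pr (A : Omega -> Prop) w : A w -> mu w <= Pr mu A.
Proof.
by move=> Aw; rewrite /Pr (bigD1 w) //= asboolT // lerDl sumr_ge0 // => ? _; exact: Pr_term_ge0.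
Qed.

Lemma Pr_not (A : Omega -> Prop) : Pr mu (fun w => ~ A w) = 1 - Pr mu A.
Proof.
case: mu_pmf => _ <-; rewrite /Pr -sumrB; apply: eq_bigr => w _.
case: (asboolP (A w)) => Aw.
  by rewrite asboolF ?subrr // => /(_ Aw).
by rewrite asboolT ?subr0.
Qed.

Lemma Pr_le1 (A : Omega -> Prop) : Pr mu A <= 1.
Proof. by rewrite -subr_ge0 -Pr_not Pr_ge0. Qed.

Lemma Pr_exists_le (I : finType) (A : I -> Omega -> Prop) :
  Pr mu (fun w => exists i, A i w) <= \sum_i Pr mu (A i).
Proof.
rewrite /Pr exchange_big /=; apply: ler_sum => w _.
case: asboolP => [[i Aiw] | _]; last by apply: sumr_ge0 => i _; exact: Pr_term_ge0.
by rewrite (bigD1 i) //= asboolT // lerDl sumr_ge0 // => j _; exact: Pr_term_ge0.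
Qed.

End FiniteProbability.

Section EmpiricalMean.
Variables (R : realType) (t N : nat) (a : 'I_t -> bool) (x : 'I_t -> nat).
Hypothesis N_gt0 : (0 < N)%N.

Lemma sum_mul_indicator (f : 'I_t -> R) : \sum_s f s * (a s)%:R = \sum_(s | a s) f s.
Proof.
by rewrite [RHS]big_mkcond; apply: eq_bigr => s _; case: (a s); rewrite ?mulr1 ?mulr0.
Qed.

Lemma empirical_meanE :
  (\sum_s (x s)%:R * (a s)%:R) / (N%:R * \sum_s (a s)%:R)
  = (\sum_(s | a s) (x s)%:R) / (N%:R * \sum_(s | a s) 1) :> R.
Proof.
rewrite sum_mul_indicator -(sum_mul_indicator (fun _ => 1)).
by congr (_ / (_ * _)); apply: eq_bigr => s _; rewrite mul1r.
Qed.

Lemma empirical_mean_dist_le1 (p : R) : 0 <= p <= 1 -> (forall s, a s -> (x s <= N)%N) ->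
  `|(\sum_s (x s)%:R * (a s)%:R) / (N%:R * \sum_s (a s)%:R) - p| <= 1.
Proof.
move=> /andP[p_ge0 p_le1] x_le; rewrite empirical_meanE.
set S := \sum_(s | a s) _; set m := \sum_(s | a s) _.
have m_ge0 : 0 <= m by apply: sumr_ge0 => s _; exact: ler01.
have S_ge0 : 0 <= S by apply: sumr_ge0 => s _; exact: ler0n.
have S_le : S <= N%:R * m.
  by rewrite mulr_sumr; apply: ler_sum => s a_s; rewrite mulr1 ler_nat x_le.
have mean_le1 : S / (N%:R * m) <= 1.
  have [m_le0 | m_gt0] := ler0P m.
    by rewrite (_ : m = 0) ?mulr0 ?invr0 ?mulr0 //; apply: le_anti; rewrite m_le0 m_ge0.
  by rewrite ler_pdivrMr ?mul1r // mulr_gt0 ?ltr0n.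
have mean_ge0 : 0 <= S / (N%:R * m) by rewrite divr_ge0 ?mulr_ge0.
by rewrite ler_norml; apply/andP; split; lra.
Qed.

Lemma deviation_le_exp_moments (p eta l : R) : 0 <= l ->
  eta < `|(\sum_s (x s)%:R * (a s)%:R) / (N%:R * \sum_s (a s)%:R) - p| ->
  1 <= \prod_(s | a s) expR (l * ((x s)%:R - N%:R * p) - l * N%:R * eta)
     + \prod_(s | a s) expR (- l * ((x s)%:R - N%:R * p) - l * N%:R * eta).
Proof.
move=> l_ge0; rewrite empirical_meanE -!expR_sum.
set S := \sum_(s | a s) _; set m := \sum_(s | a s) _ => dev.
have sum_const (k : R) : \sum_(s | a s) k = k * m.
  by rewrite mulr_sumr; apply: eq_bigr => s _; rewrite mulr1.
have sumE (l' : R) : \sum_(s | a s) (l' * ((x s)%:R - N%:R * p) - l * N%:R * eta)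
    = l' * (S - N%:R * p * m) - l * N%:R * eta * m.
  by rewrite sumrB -mulr_sumr sumrB !sum_const.
rewrite !sumE.
have expR_ge1 (y : R) : 0 <= y -> 1 <= expR y by move=> ?; apply: le_trans (expR_ge1Dx _); lra.
have m_ge0 : 0 <= m by apply: sumr_ge0 => s _; exact: ler01.
have [m_le0 | m_gt0] := ler0P m.
  rewrite (_ : m = 0) ?mulr0 ?subr0; last by apply: le_anti; rewrite m_le0 m_ge0.
  have S_ge0 : 0 <= S by apply: sumr_ge0 => s _; exact: ler0n.
  by apply: le_trans (expR_ge1 _ (mulr_ge0 l_ge0 S_ge0)) _; rewrite lerDl expR_ge0.
have Nm_gt0 : 0 < N%:R * m by rewrite mulr_gt0 ?ltr0n.
have {}dev : N%:R * m * eta < `|S - N%:R * p * m|.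
  rewrite (_ : S - _ = N%:R * m * (S / (N%:R * m) - p)); last first.
    by rewrite mulrBr [_ * (S / _)]mulrC divfK ?gt_eqF //; ring.
  by rewrite normrM gtr0_norm // ltr_pM2l.
have [dev_ge0 | dev_lt0] := lerP 0 (S - N%:R * p * m).
  have : 1 <= expR (l * (S - N%:R * p * m) - l * N%:R * eta * m).
    apply: expR_ge1; rewrite (_ : _ - _ = l * (S - N%:R * p * m - N%:R * m * eta)); last by ring.
    by rewrite mulr_ge0 // subr_ge0 ltW // -(ger0_norm dev_ge0).
  by have := expR_ge0 (- l * (S - N%:R * p * m) - l * N%:R * eta * m); lra.
have : 1 <= expR (- l * (S - N%:R * p * m) - l * N%:R * eta * m).
  apply: expR_ge1; rewrite (_ : _ - _ = l * (- (S - N%:R * p * m) - N%:R * m * eta)); last by ring.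
  by rewrite mulr_ge0 // subr_ge0 ltW // -(ltr0_norm dev_lt0).
by have := expR_ge0 (l * (S - N%:R * p * m) - l * N%:R * eta * m); lra.
Qed.

End EmpiricalMean.

Section Estimation.
Variables (R : realType) (Omega : finType) (mu : Omega -> R).
Hypothesis mu_pmf : is_pmf mu.
Variables (F t N : nat) (P : 'M[R]_F) (rec cache : 'I_F -> 'I_t -> Omega -> bool)
  (d : 'I_F -> 'I_t -> Omega -> nat) (q : R).
Hypothesis rec_cache_indep : mutually_independent mu
  (fun x : ('I_F * 'I_t) + ('I_F * 'I_t) =>
     match x with inl js => rec js.1 js.2 | inr js => cache js.1 js.2 end).
Hypothesis rec_prob : forall j s, Pr mu (fun w => rec j s w = true) = q.
Hypothesis d_binomial : forall (i j : 'I_F) (a : 'I_t -> bool) (k : 'I_t -> nat),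
  Pr mu (fun w => (forall s, rec j s w = a s) /\ (forall s, a s -> d i s w = k s))
  = Pr mu (fun w => forall s, rec j s w = a s) * \prod_(s | a s) binom_pmf N (P i j) (k s).

Definition rec_pattern j w : {ffun 'I_t -> bool} := [ffun s => rec j s w].

Definition pattern_mass j (a : {ffun 'I_t -> bool}) : R :=
  \sum_(w | rec_pattern j w == a) mu w.

Lemma rec_pattern_eqE j w a : (rec_pattern j w == a) = `[< forall s, rec j s w = a s >].
Proof.
apply/eqP/asboolP => [<- s | rec_a]; first by rewrite ffunE.
by apply/ffunP => s; rewrite ffunE.
Qed.

Lemma pattern_massE j a : pattern_mass j a = Pr mu (fun w => forall s, rec j s w = a s).
Proof.
by rewrite /pattern_mass -Pr_predE; apply: eq_Pr => w; rewrite rec_pattern_eqE; split => /asboolP.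
Qed.

Lemma pattern_mass_ge0 j a : 0 <= pattern_mass j a.
Proof. by apply: sumr_ge0 => w _; exact: mu_ge0. Qed.

Lemma rec_prob_ge0_le1 (j : 'I_F) (s : 'I_t) : 0 <= q <= 1.
Proof. by rewrite -(rec_prob j s) Pr_ge0 ?Pr_le1. Qed.

Lemma pattern_mass_prod j a : pattern_mass j a = \prod_s (if a s then q else 1 - q).
Proof.
pose slot s : ('I_F * 'I_t) + ('I_F * 'I_t) := inl (j, s).
pose b (x : ('I_F * 'I_t) + ('I_F * 'I_t)) := if x is inl js then a js.2 else false.
have := rec_cache_indep (slot @: setT) b.
rewrite big_imset /=; last by move=> s s' _ _ [].
have -> : Pr mu (fun w => forall x, x \in slot @: setT ->
    (match x with inl js => rec js.1 js.2 | inr js => cache js.1 js.2 end) w = b x)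
  = pattern_mass j a.
  rewrite pattern_massE; apply: eq_Pr => w; split => [rec_b s | rec_a _ /imsetP[s _ ->]].
    exact: (rec_b (slot s) (imset_f _ (in_setT s))).
  exact: rec_a.
move=> ->; apply: eq_big => [s | s _]; first by rewrite ?in_setT.
rewrite /b /=; case: (a s); first exact: rec_prob.
rewrite -(rec_prob j s) -Pr_not //; apply: eq_Pr => w.
by case: (rec j s w); split.
Qed.

Lemma sum_pattern_mass_prod j (rho : R) :
  \sum_(a : {ffun 'I_t -> bool}) pattern_mass j a * \prod_(s | a s) rho
  = (q * rho + (1 - q)) ^+ t.
Proof.
pose f (s : 'I_t) (b : bool) := (if b then q else 1 - q) * (if b then rho else 1).
rewrite (eq_bigr (fun a : {ffun 'I_t -> bool} => \prod_s f s (a s))); last first.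
  by move=> a _; rewrite pattern_mass_prod [X in _ * X]big_mkcond -big_split.
rewrite -(bigA_distr_bigA f) /=.
by under eq_bigr do rewrite big_bool /f /= mulr1; rewrite prodr_const card_ord.
Qed.

Definition counts_le_N w :=
  [forall i, [forall j, [forall s, rec j s w ==> (d i s w <= N)%N]]].

Lemma mu_eq0_counts_gtN w : ~~ counts_le_N w -> mu w = 0.
Proof.
case/forallPn => i /forallPn[j] /forallPn[s].
rewrite negb_imply -ltnNge => /andP[rec_js d_gtN].
apply/eqP; rewrite eq_le mu_ge0 // andbT.
have := d_binomial i j (rec j ^~ w) (d i ^~ w).
rewrite (bigD1 s) //= {1}/binom_pmf bin_small // !mul0r mulr0 => <-.
by apply: (mu_le_Pr mu_pmf); split.
Qed.

Lemma count_lt_of_pattern i j a w s :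
  counts_le_N w -> rec_pattern j w == a -> a s -> (d i s w < N.+1)%N.
Proof.
move=> /forallP/(_ i)/forallP/(_ j)/forallP/(_ s)/implyP d_le.
by rewrite rec_pattern_eqE => /asboolP rec_a a_s; rewrite ltnS d_le ?rec_a.
Qed.

Lemma pattern_counts_binomial i j a (k : 'I_t -> nat) :
  \sum_(w | (rec_pattern j w == a) && [forall s, a s ==> (d i s w == k s)]) mu w
  = pattern_mass j a * \prod_(s | a s) binom_pmf N (P i j) (k s).
Proof.
rewrite pattern_massE -(d_binomial i j a k) -Pr_predE; apply: eq_Pr => w.
rewrite rec_pattern_eqE; split => [/andP[/asboolP rec_a /forallP d_k] | [rec_a d_k]].
  by split=> // s a_s; apply/eqP; exact: implyP (d_k s) a_s.
by apply/andP; split; [apply/asboolP | apply/forallP => s; apply/implyP => /d_k ->].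
Qed.

(* The request counts of the slots in the pattern, as a finite-valued vector: counts above [N]
   only occur on a null set and are truncated, and slots outside the pattern are set to 0. *)
Definition counts i (a : {ffun 'I_t -> bool}) w : {ffun 'I_t -> 'I_N.+1} :=
  [ffun s => inord (if a s then d i s w else 0)].

Definition counts_weight i j (a : {ffun 'I_t -> bool}) (k : {ffun 'I_t -> 'I_N.+1}) : R :=
  \prod_s (if a s then binom_pmf N (P i j) (k s) else (k s == 0 :> nat)%:R).

Lemma counts_eqE i j a w (k : {ffun 'I_t -> 'I_N.+1}) :
  counts_le_N w -> rec_pattern j w == a -> [forall s, ~~ a s ==> (k s == 0 :> nat)] ->
  (counts i a w == k) = [forall s, a s ==> (d i s w == k s)].
Proof.
move=> w_ok pat /forallP k_off; apply/eqP/forallP => [<- s | d_k].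
  apply/implyP => a_s; rewrite ffunE a_s inordK //.
  exact: count_lt_of_pattern w_ok pat a_s.
apply/ffunP => s; apply: val_inj; rewrite ffunE /=.
case: (boolP (a s)) => a_s; first by rewrite (eqP (implyP (d_k s) a_s)) inordK.
by rewrite (eqP (implyP (k_off s) a_s)) inordK.
Qed.

Lemma pattern_counts_mass i j a k :
  \sum_(w | (rec_pattern j w == a) && (counts i a w == k)) mu w
  = pattern_mass j a * counts_weight i j a k.
Proof.
have [k_off | /forallPn[s]] := boolP [forall s, ~~ a s ==> (k s == 0 :> nat)]; last first.
  rewrite negb_imply => /andP[a_s k_s].
  rewrite /counts_weight (bigD1 s) //= (negbTE a_s) (negbTE k_s) mul0r mulr0.
  apply: big1 => w /andP[_ /eqP counts_k]; move: k_s.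
  by rewrite -counts_k ffunE (negbTE a_s) inordK.
have -> : counts_weight i j a k = \prod_(s | a s) binom_pmf N (P i j) (k s).
  rewrite /counts_weight [RHS]big_mkcond; apply: eq_bigr => s _.
  by case: (boolP (a s)) => // a_s; rewrite (eqP (implyP (forallP k_off s) a_s)).
rewrite -(pattern_counts_binomial i j a (fun s => k s)) [LHS]big_mkcond [RHS]big_mkcond.
apply: eq_bigr => w _.
have [w_ok | /mu_eq0_counts_gtN ->] := boolP (counts_le_N w); last by rewrite !if_same.
by case: (boolP (rec_pattern j w == a)) => //= pat; rewrite (counts_eqE i w_ok pat k_off).
Qed.

Lemma pattern_expect_prod i j a (G : 'I_t -> nat -> R) :
  \sum_(w | rec_pattern j w == a) mu w * \prod_(s | a s) G s (d i s w)
  = pattern_mass j a * \prod_(s | a s) \sum_(x < N.+1) binom_pmf N (P i j) x * G s x.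
Proof.
pose H (k : {ffun 'I_t -> 'I_N.+1}) := \prod_(s | a s) G s (k s).
have -> : \sum_(w | rec_pattern j w == a) mu w * \prod_(s | a s) G s (d i s w)
    = \sum_(w | rec_pattern j w == a) mu w * H (counts i a w).
  apply: eq_bigr => w pat.
  have [w_ok | /mu_eq0_counts_gtN ->] := boolP (counts_le_N w); last by rewrite !mul0r.
  congr (_ * _); apply: eq_bigr => s a_s; rewrite ffunE a_s inordK //.
  exact: count_lt_of_pattern w_ok pat a_s.
rewrite (partition_big (counts i a) predT) //=.
have mass_k k : \sum_(w | (rec_pattern j w == a) && (counts i a w == k)) mu w * H (counts i a w)
    = pattern_mass j a * (counts_weight i j a k * H k).
  by rewrite mulrA -pattern_counts_mass mulr_suml; apply: eq_bigr => w /andP[_ /eqP ->].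
rewrite (eq_bigr _ (fun k _ => mass_k k)) -mulr_sumr; congr (_ * _).
pose f s (x : 'I_N.+1) := if a s then binom_pmf N (P i j) x * G s x else (x == 0 :> nat)%:R.
rewrite (eq_bigr (fun k : {ffun 'I_t -> 'I_N.+1} => \prod_s f s (k s))); last first.
  move=> k _; rewrite /counts_weight /H [X in _ * X]big_mkcond -big_split.
  by apply: eq_bigr => s _; rewrite /f; case: (a s); rewrite /= ?mulr1.
rewrite -(bigA_distr_bigA f) [RHS]big_mkcond; apply: eq_bigr => s _.
rewrite /f; case: (a s) => //; rewrite (bigD1 ord0) //= big1 ?addr0 // => x x_ne0.
by rewrite -(inj_eq val_inj) /= in x_ne0; rewrite (negbTE x_ne0).
Qed.

Hypothesis N_gt0 : (0 < N)%N.
Hypothesis P_ge0_le1 : forall i j, 0 <= P i j <= 1.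

Definition estimation_error i j w : R :=
  `|Phat R N (fun i s => d i s w) (fun j s => rec j s w) i j - P i j|.

Lemma estimation_error_le1 i j w : counts_le_N w -> estimation_error i j w <= 1.
Proof.
move=> /forallP/(_ i)/forallP/(_ j)/forallP d_le.
rewrite /estimation_error mxE; apply: empirical_mean_dist_le1 => // s.
exact: implyP (d_le s).
Qed.

Lemma deviation_le_pattern_moments i j a w (eta l : R) : 0 <= l ->
  rec_pattern j w == a -> eta < estimation_error i j w ->
  1 <= \prod_(s | a s) expR (l * ((d i s w)%:R - N%:R * P i j) - l * N%:R * eta)
     + \prod_(s | a s) expR (- l * ((d i s w)%:R - N%:R * P i j) - l * N%:R * eta).
Proof.
move=> l_ge0; rewrite rec_pattern_eqE => /asboolP rec_a.
rewrite /estimation_error mxE => /(deviation_le_exp_moments N_gt0 l_ge0).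
have pattern_eq : rec j ^~ w =1 a by move=> s; rewrite rec_a.
by rewrite !(eq_bigl _ _ pattern_eq).
Qed.

Lemma deviation_pattern_mass_le i j a (eta : R) : 0 < eta ->
  \sum_(w | rec_pattern j w == a) (if `[< eta < estimation_error i j w >] then mu w else 0)
  <= 2 * (pattern_mass j a * \prod_(s | a s) expR (- (N%:R * (eta ^+ 2 / 2)))).
Proof.
move=> eta_gt0; set rho := expR _.
have [eta_le1 | eta_gt1] := lerP eta 1; last first.
  have rhs_ge0 : 0 <= 2 * (pattern_mass j a * \prod_(s | a s) rho).
    by rewrite !mulr_ge0 ?pattern_mass_ge0 // prodr_ge0 // => s _; exact: expR_ge0.
  apply: le_trans rhs_ge0; rewrite big1 // => w _.
  have [w_ok | /mu_eq0_counts_gtN ->] := boolP (counts_le_N w); last by rewrite if_same.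
  rewrite asboolF //; apply/negP; rewrite -leNgt.
  exact: le_trans (estimation_error_le1 i j w_ok) (ltW eta_gt1).
pose G (l : R) (s : 'I_t) (x : nat) := expR (l * (x%:R - N%:R * P i j) - eta * N%:R * eta).
have moment_le l : -1 <= l <= 1 -> l ^+ 2 = eta ^+ 2 ->
    pattern_mass j a * \prod_(s | a s) \sum_(x < N.+1) binom_pmf N (P i j) x * G l s x
    <= pattern_mass j a * \prod_(s | a s) rho.
  move=> l11 l_eta; apply: ler_wpM2l; first exact: pattern_mass_ge0.
  apply: ler_prod => s _; rewrite binomial_chernoff_term_le // andbT.
  by apply: sumr_ge0 => x _; rewrite mulr_ge0 ?expR_ge0 ?binom_pmf_ge0.
apply: (@le_trans _ _ (\sum_(w | rec_pattern j w == a)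
    (mu w * \prod_(s | a s) G eta s (d i s w) + mu w * \prod_(s | a s) G (- eta) s (d i s w)))).
  apply: ler_sum => w pat; case: asboolP => [dev | _]; last first.
    by rewrite addr_ge0 // mulr_ge0 ?mu_ge0 // prodr_ge0 // => s _; exact: expR_ge0.
  rewrite -mulrDr ler_peMr ?mu_ge0 //.
  exact: deviation_le_pattern_moments (ltW eta_gt0) pat dev.
rewrite big_split /= !pattern_expect_prod [2 * _]mulr_natl mulr2n.
by apply: lerD; apply: moment_le; rewrite ?sqrrN //; apply/andP; split; lra.
Qed.

Lemma Pr_estimation_error_gt i j (eta : R) : 0 < eta ->
  Pr mu (fun w => eta < estimation_error i j w)
  <= 2 * (q * expR (- (N%:R * (eta ^+ 2 / 2))) + (1 - q)) ^+ t.
Proof.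
move=> eta_gt0; rewrite /Pr (partition_big (rec_pattern j) predT) //=.
apply: le_trans (ler_sum _ (fun a _ => @deviation_pattern_mass_le i j a eta eta_gt0)) _.
by rewrite -mulr_sumr sum_pattern_mass_prod.
Qed.

End Estimation.

Section PlugInMaximiser.
Variables (R : realType) (F : nat) (c r : R).

Lemma bilinE (x : 'cV[R]_F) (A : 'M[R]_F) (y : 'cV[R]_F) :
  bilin x A y = \sum_i \sum_j x i 0 * A i j * y j 0.
Proof.
rewrite /bilin mxE; under eq_bigr => j _ do rewrite mxE mulr_suml.
by rewrite exchange_big; apply: eq_bigr => i _; apply: eq_bigr => j _; rewrite mxE.
Qed.

Lemma inC0 : 0 <= c -> 0 <= r -> inC c r (0 : 'cV[R]_F) 0.
Proof.
move=> c_ge0 r_ge0.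
by do !split=> [i|]; rewrite ?big1 ?mxE ?lexx ?ler01 // => i _; rewrite mxE.
Qed.

Lemma bilin_entrywise_close (u v : 'cV[R]_F) (A B : 'M[R]_F) (eta : R) :
  inC c r u v -> 0 <= eta -> (forall i j, `|A i j - B i j| <= eta) ->
  `|bilin u A v - bilin u B v| <= eta * c * r.
Proof.
move=> [u01 [v01 [u_le v_le]]] eta_ge0 AB_close.
have u_ge0 i : 0 <= u i 0 by case/andP: (u01 i).
have v_ge0 j : 0 <= v j 0 by case/andP: (v01 j).
rewrite !bilinE -sumrB.
rewrite (eq_bigr (fun i => \sum_j u i 0 * (A i j - B i j) * v j 0)); last first.
  by move=> i _; rewrite -sumrB; apply: eq_bigr => j _; ring.
apply: le_trans (ler_norm_sum _ _ _) _.
apply: (@le_trans _ _ (\sum_i \sum_j u i 0 * eta * v j 0)).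
  apply: ler_sum => i _; apply: le_trans (ler_norm_sum _ _ _) _; apply: ler_sum => j _.
  rewrite !normrM (ger0_norm (u_ge0 i)) (ger0_norm (v_ge0 j)).
  by rewrite ler_wpM2r // ler_wpM2l.
have -> : \sum_i \sum_j u i 0 * eta * v j 0 = eta * (\sum_i u i 0) * (\sum_j v j 0).
  rewrite -mulrA mulr_suml mulr_sumr; apply: eq_bigr => i _.
  by rewrite !mulr_sumr; apply: eq_bigr => j _; ring.
have su_ge0 : 0 <= \sum_i u i 0 by apply: sumr_ge0.
have sv_ge0 : 0 <= \sum_j v j 0 by apply: sumr_ge0.
by apply: ler_pM; rewrite ?mulr_ge0 // ler_wpM2l.
Qed.

Lemma argmax_near_opt (eta : R) (P Ph : 'M[R]_F) (u v : 'cV[R]_F) :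
  0 <= c -> 0 <= r -> 0 <= eta -> (forall i j, `|Ph i j - P i j| <= eta) ->
  is_argmaxC c r Ph u v -> supC c r P - 2 * eta * c * r <= bilin u P v.
Proof.
move=> c_ge0 r_ge0 eta_ge0 close [uv_in uv_max]; rewrite lerBlDr.
apply: ge_sup; first by exists (bilin 0 P 0), 0, 0; split=> //; exact: inC0.
move=> _ [u' [v' [uv'_in ->]]].
have := bilin_entrywise_close uv'_in eta_ge0 close.
have := bilin_entrywise_close uv_in eta_ge0 close.
have := uv_max u' v' uv'_in.
by rewrite !ler_norml; lra.
Qed.

Lemma eps_cover_size_gt0 (eps : R) (cov : seq ('cV[R]_F * 'cV[R]_F)) :
  0 <= c -> 0 <= r -> is_eps_cover c r eps cov -> (0 < size cov)%N.
Proof.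
move=> c_ge0 r_ge0 [_ /(_ 0 0 (inC0 c_ge0 r_ge0))[xy]].
by case: cov.
Qed.

End PlugInMaximiser.

Lemma kappa_ok_ge1 (R : realType) (kappa : R) : kappa_ok kappa -> 1 <= kappa.
Proof.
move/(_ 1%N 1%N (const_mx 1) (const_mx 1) (const_mx 1)).
by rewrite bilinE /norm1 /frob !big_ord1 !mxE !mulr1 normr1 expr1n sqrtr1 !mulr1.
Qed.

Section SampleSize.
Variable R : realType.

Lemma subgauss_factor_le (N F : nat) (eps c r kappa : R) :
  (0 < F)%N -> 0 < c -> 0 < r -> 1 <= kappa ->
  expR (- (N%:R * ((eps / (2 * c * r)) ^+ 2 / 2)))
  <= expR (- (N%:R * eps ^+ 2) / (8 * kappa ^+ 2 * F%:R ^+ 2 * c ^+ 2 * r ^+ 2)).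
Proof.
move=> F_gt0 c_gt0 r_gt0 kappa_ge1; rewrite ler_expR mulNr lerN2.
have -> : N%:R * ((eps / (2 * c * r)) ^+ 2 / 2) = N%:R * eps ^+ 2 / (8 * c ^+ 2 * r ^+ 2).
  by field; rewrite !gt_eqF.
apply: ler_wpM2l; first by rewrite mulr_ge0 ?sqr_ge0.
have cr_gt0 : 0 < 8 * c ^+ 2 * r ^+ 2 by rewrite !mulr_gt0 ?exprn_gt0.
have kF_ge1 : 1 <= kappa ^+ 2 * F%:R ^+ 2.
  by rewrite mulr_ege1 ?exprn_ege1 // ler1n.
have -> : 8 * kappa ^+ 2 * F%:R ^+ 2 * c ^+ 2 * r ^+ 2
    = kappa ^+ 2 * F%:R ^+ 2 * (8 * c ^+ 2 * r ^+ 2) by ring.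
rewrite invfM; apply: ler_piMl; first by rewrite invr_ge0 ltW.
by rewrite invf_le1 // (lt_le_trans ltr01).
Qed.

Lemma geometric_pow_le (t : nat) (q rho rho0 : R) :
  0 < q -> ((0 < t)%N -> q <= 1) -> 0 <= rho <= rho0 ->
  (q * rho + (1 - q)) ^+ t <= expR (- (t%:R * (q * (1 - rho0)))).
Proof.
case: t => [|t] q_gt0 q_le1 /andP[rho_ge0 rho_le]; first by rewrite mul0r oppr0 expR0.
have {}q_le1 := q_le1 isT.
rewrite mulrC -mulrN expRM_natl lerXn2r ?nnegrE ?expR_ge0 //.
  by rewrite addr_ge0 ?mulr_ge0 // ?subr_ge0 // ltW.
apply: le_trans (expR_ge1Dx _).
by have := ler_wpM2l (ltW q_gt0) rho_le; lra.
Qed.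

Lemma sample_size_tail_le (F N t : nat) (c r eps delta kappa q M : R) :
  (0 < F)%N -> (0 < N)%N -> 0 < eps -> 0 < c -> 0 < r -> 0 < delta -> 1 <= kappa -> 1 <= M ->
  0 < q -> ((0 < t)%N -> q <= 1) ->
  t%:R >= 1 / (q * (1 - expR (- (N%:R * eps ^+ 2)
                          / (8 * kappa ^+ 2 * F%:R ^+ 2 * c ^+ 2 * r ^+ 2))))
          * ln (2 * M * F%:R ^+ 2 / delta) ->
  (2 * (q * expR (- (N%:R * ((eps / (2 * c * r)) ^+ 2 / 2))) + (1 - q)) ^+ t) *+ (F * F)
  <= delta.
Proof.
move=> F_gt0 N_gt0 eps_gt0 c_gt0 r_gt0 delta_gt0 kappa_ge1 M_ge1 q_gt0 q_le1.
set rho0 := expR (_ / _); set X := 2 * M * F%:R ^+ 2 / delta => t_ge.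
have F_gt0' : 0 < F%:R :> R by rewrite ltr0n.
have X_gt0 : 0 < X by rewrite !mulr_gt0 ?invr_gt0 ?exprn_gt0 //; lra.
have rho0_lt1 : rho0 < 1.
  have den_gt0 : 0 < 8 * kappa ^+ 2 * F%:R ^+ 2 * c ^+ 2 * r ^+ 2.
    by rewrite !mulr_gt0 ?exprn_gt0 //; lra.
  by rewrite expR_lt1 mulNr oppr_lt0 divr_gt0 // mulr_gt0 ?ltr0n ?exprn_gt0.
have D_gt0 : 0 < q * (1 - rho0) by rewrite mulr_gt0 // subr_gt0.
have ln_le : ln X <= t%:R * (q * (1 - rho0)).
  have := ler_wpM2r (ltW D_gt0) t_ge.
  by rewrite mul1r mulrAC mulVf ?mul1r // gt_eqF.
have pow_le : (q * expR (- (N%:R * ((eps / (2 * c * r)) ^+ 2 / 2))) + (1 - q)) ^+ t <= X^-1.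
  apply: le_trans (@geometric_pow_le t q _ rho0 q_gt0 q_le1 _) _.
    by rewrite expR_ge0 /=; exact: subgauss_factor_le.
  have -> : X^-1 = expR (- ln X) by rewrite expRN lnK ?posrE.
  by rewrite ler_expR lerN2.
apply: le_trans (_ : (2 * X^-1) *+ (F * F) <= _).
  by rewrite lerMn2r ler_pM2l // pow_le orbT.
rewrite -mulr_natr natrM.
have -> : 2 * X^-1 * (F%:R * F%:R) = delta / M.
  by rewrite /X; field; rewrite !gt_eqF //; lra.
by rewrite ler_pdivrMr ?ler_peMr //; lra.
Qed.

End SampleSize.

Theorem theorem2 (R : realType) (F N t : nat) (c r eps delta kappa : R)
  (P : 'M[R]_F) (cov : seq ('cV[R]_F * 'cV[R]_F))
  (Omega : finType) (mu : Omega -> R)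
  (rec : 'I_F -> 'I_t -> Omega -> bool)     (* v_j^{s-1}, s = 0..t-1 *)
  (cache : 'I_F -> 'I_t -> Omega -> bool)   (* caching indicators *)
  (d : 'I_F -> 'I_t -> Omega -> nat)        (* requests d_i^(s) *)
  (ustar vstar : Omega -> 'cV[R]_F) :
  (0 < N)%N -> 0 < c -> 0 < r -> 0 < eps -> 0 < delta -> 0 < kappa ->
  kappa_ok kappa ->
  (forall i j, 0 <= P i j <= 1) ->
  is_eps_cover c r eps cov ->
  is_pmf mu ->
  (* recommendation and caching indicators: mutually independent,
     Bernoulli(q = r/F) and Bernoulli(p = c/F) respectively *)
  mutually_independent mu
    (fun x : ('I_F * 'I_t) + ('I_F * 'I_t) =>
       match x with inl js => rec js.1 js.2 | inr js => cache js.1 js.2 end) ->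
  (forall j s, Pr mu (fun w => rec j s w = true) = r / F%:R) ->
  (forall j s, Pr mu (fun w => cache j s w = true) = c / F%:R) ->
  (* conditionally on the recommendation indicators of file j, the d_i^{(s)}
     over the slots s with v_j^{s-1} = 1 are independent Binomial(N, p_ij) *)
  (forall (i j : 'I_F) (a : 'I_t -> bool) (k : 'I_t -> nat),
     Pr mu (fun w => (forall s, rec j s w = a s) /\
                     (forall s, a s -> d i s w = k s))
     = Pr mu (fun w => forall s, rec j s w = a s)
       * \prod_(s | a s) binom_pmf N (P i j) (k s)) ->
  (* the pair ustar, vstar is an argmax of u^T Phat v over C_{c,r} *)
  (forall w, is_argmaxC c r (Phat R N (fun i s => d i s w) (fun j s => rec j s w))
                        (ustar w) (vstar w)) ->
  (* sample-size condition *)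
  t%:R >= 1 / ((r / F%:R) *
               (1 - expR (- (N%:R * eps ^+ 2)
                          / (8 * kappa ^+ 2 * F%:R ^+ 2 * c ^+ 2 * r ^+ 2))))
          * ln (2 * (size cov)%:R * F%:R ^+ 2 / delta) ->
  Pr mu (fun w => bilin (ustar w) P (vstar w) >= supC c r P - eps) >= 1 - delta.
Proof.
move=> N_gt0 c_gt0 r_gt0 eps_gt0 delta_gt0 _ kappa_okP P01 cover mu_pmf indep rec_prob _
  d_binomial argmax t_large.
set eta := eps / (2 * c * r).
have eta_gt0 : 0 < eta by rewrite divr_gt0 // !mulr_gt0.
pose bad w := exists ij : 'I_F * 'I_F, eta < estimation_error N P rec d ij.1 ij.2 w.
have bad_le : Pr mu bad <= delta.
  apply: le_trans (Pr_exists_le mu_pmf _) _.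
  apply: le_trans (ler_sum _ (fun ij _ =>
    Pr_estimation_error_gt mu_pmf indep rec_prob d_binomial N_gt0 P01 ij.1 ij.2 eta_gt0)) _.
  rewrite sumr_const card_prod card_ord.
  have [-> | F_gt0] := posnP F; first by rewrite mulr0n ltW.
  apply: (sample_size_tail_le (kappa := kappa) (M := (size cov)%:R)) => //.
  - exact: kappa_ok_ge1.
  - by rewrite ler1n; exact: eps_cover_size_gt0 (ltW c_gt0) (ltW r_gt0) cover.
  - by rewrite divr_gt0 ?ltr0n.
  - move=> t_gt0.
    by case/andP: (rec_prob_ge0_le1 mu_pmf rec_prob (Ordinal F_gt0) (Ordinal t_gt0)).
apply: le_trans (le_Pr mu_pmf (A := fun w => ~ bad w) _); first by rewrite Pr_not // lerB.
move=> w not_bad; rewrite lerBlDr.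
have close i j : estimation_error N P rec d i j w <= eta.
  by rewrite leNgt; apply/negP => dev; apply: not_bad; exists (i, j).
have := argmax_near_opt (ltW c_gt0) (ltW r_gt0) (ltW eta_gt0) close (argmax w).
by rewrite (_ : 2 * eta * c * r = eps) ?lerBlDr // /eta; field; rewrite !gt_eqF.
Qed.
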